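(* Let $C$ be a contractible globular extension and $G$ an $\infty$-groupoid of type $C$. For $n\ge1$, the groupoid $\Pi_n(G)$ does not depend on the choice of the pregroupoidal structure on $C$: if two pregroupoidal structures on $C$ are given, the two resulting graphs $\Pi_n(G)$ coincide and their compositions and identities coincide.
   Context: The globe category $\mathbb{G}$ has objects $D_n$ ($n\ge0$), generated by $\sigma_n,\tau_n\colon D_{n-1}\to D_n$ ($n\ge1$) with $\sigma_{n+1}\sigma_n=\tau_{n+1}\sigma_n$, $\sigma_{n+1}\tau_n=\tau_{n+1}\tau_n$; $\sigma^i_j=\sigma_i\cdots\sigma_{j+1}$, $\tau^i_j=\tau_i\cdots\tau_{j+1}$. A table of dimensions: integers $i_1,\dots,i_n,i'_1,\dots,i'_{n-1}$ with $i_k>i'_k<i_{k+1}$; dimension = largest entry. In a category $C$ under $\mathbb{G}$, its globular sum is the colimit of $D_{i_1}\xleftarrow{\sigma^{i_1}_{i'_1}}D_{i'_1}\xrightarrow{\tau^{i_2}_{i'_1}}D_{i_2}\leftarrow\cdots\xrightarrow{\tau^{i_n}_{i'_{n-1}}}D_{i_n}$, written $D_{i_1}\amalg_{D_{i'_1}}\cdots\amalg_{D_{i'_{n-1}}}D_{i_n}$. A globular extension is a category under $\mathbb{G}$ with all globular sums. $f,g\colon D_n\to X$ are globularly parallel if $n=0$ or $f\sigma_n=g\sigma_n$, $f\tau_n=g\tau_n$; a lifting of $(f,g)$ is $h\colon D_{n+1}\to X$ with $h\sigma_{n+1}=f$, $h\tau_{n+1}=g$; $(f,g)\colon D_n\to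 S$ is admissible if globularly parallel with $S$ a globular sum of dimension $\le n+1$; $C$ is contractible if every admissible pair has a lifting. An $\infty$-groupoid of type $C$ is a presheaf $G$ on $C$ such that each canonical map $G(D_{i_1}\amalg_{D_{i'_1}}\cdots\amalg_{D_{i'_{n-1}}}D_{i_n})\to G_{i_1}\times_{G_{i'_1}}\cdots\times_{G_{i'_{n-1}}}G_{i_n}$ is bijective, where $G_i=G(D_i)$ ($i$-arrows), $s=G(\sigma_i)$, $t=G(\tau_i)$ (source, target), $s^i_j=G(\sigma^i_j)$, $t^i_j=G(\tau^i_j)$, and the fiber product consists of $(u_1,\dots,u_n)$ with $s^{i_k}_{i'_k}(u_k)=t^{i_{k+1}}_{i'_k}(u_{k+1})$. A pregroupoidal structure on $C$ consists of morphisms $\nabla^i_j\colon D_i\to D_i\amalg_{D_j}D_i$ ($i>j\ge0$), $\kappa_i\colon D_{i+1}\to D_i$, $w^i_j\colon D_i\to D_i$ with $\nabla^i_{i-1}\sigma_i=\epsilon_2\sigma_i$, $\nabla^i_{i-1}\tau_i=\epsilon_1\tau_i$ ($\epsilon_1,\epsilon_2$ the canonical inclusions of the first and second summand), $\nabla^i_j\sigma_i=(\sigma_i\amalg_{D_j}\sigma_i)\nabla^{i-1}_j$, $\nabla^i_j\tau_i=(\tau_i\amalg_{D_j}\tau_i)\nabla^{i-1}_j$ for $j<i-1$, $\kappa_i\sigma_{i+1}=\kappa_i\tau_{i+1}=\mathrm{id}$, $w^i_{i-1}\sigma_i=\tau_i$, $w^i_{i-1}\tau_i=\sigma_i$, $w^i_j\sigma_i=\sigma_iw^{i-1}_j$,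 $w^i_j\tau_i=\tau_iw^{i-1}_j$ for $j<i-1$. It induces on $G$: compositions $v\ast^i_ju=G(\nabla^i_j)(\xi)$ for $s^i_j(v)=t^i_j(u)$, $\xi$ corresponding to $(v,u)$; units $k_i=G(\kappa_i)\colon G_i\to G_{i+1}$. For $n$-arrows $u,v$, $u\sim v$ if some $(n+1)$-arrow has source $u$ and target $v$; this is an equivalence relation compatible with $\ast^n_{n-1}$. $\Pi_n(G)$ ($n\ge1$) is the graph with objects $G_{n-1}$, arrows $G_n/\sim$ with source/target induced by $s,t$, composition induced by $\ast^n_{n-1}$ and identities induced by $k_{n-1}$. *)

From mathcomp Require Import all_boot.
Set Implicit Arguments.
Unset Strict Implicit.
Unset Printing Implicit Defensive.

Record Cat := {
  Ob : Type;
  Hom : Ob -> Ob -> Type;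
  cmp : forall a b c, Hom b c -> Hom a b -> Hom a c;
  cid : forall a, Hom a a;
  cmpA : forall a b c d (h : Hom c d) (g : Hom b c) (f : Hom a b),
      cmp h (cmp g f) = cmp (cmp h g) f;
  cmp1l : forall a b (f : Hom a b), cmp (cid b) f = f;
  cmp1r : forall a b (f : Hom a b), cmp f (cid a) = f }.

(** A functor G -> C is the same as the images D n of the D_n and of the
    generators sigma_{n+1}, tau_{n+1} : D_n -> D_{n+1} (here [sg n], [tg n])
    satisfying the defining relations of G. *)
Record GCat := {
  GC :> Cat;
  D : nat -> Ob GC;
  sg : forall n, Hom (D n) (D n.+1);
  tg : forall n, Hom (D n) (D n.+1);
  sg_rel : forall n, cmp (sg n.+1) (sg n) = cmp (tg n.+1) (sg n);
  tg_rel : forall n, cmp (sg n.+1) (tg n) = cmp (tg n.+1) (tg n) }.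

Section Globular.
Variable C : GCat.

(** [IsSig i j m] : m is the iterated source map sigma^i_j = sigma_i ... sigma_{j+1}
    : D_j -> D_i  (similarly [IsTau]). *)
Local Unset Implicit Arguments.
Inductive IsSig : forall i j : nat, Hom (D C j) (D C i) -> Prop :=
  | IsSig0 j : IsSig j j (cid (D C j))
  | IsSigS i j m : IsSig i j m -> IsSig i.+1 j (cmp (sg C i) m).
Inductive IsTau : forall i j : nat, Hom (D C j) (D C i) -> Prop :=
  | IsTau0 j : IsTau j j (cid (D C j))
  | IsTauS i j m : IsTau i j m -> IsTau i.+1 j (cmp (tg C i) m).
Local Set Implicit Arguments.

(** A table of dimensions (i_1, i'_1, i_2, ..., i'_{n-1}, i_n) is encoded as
    [i_1] together with the list [[:: (i'_1, i_2); ...; (i'_{n-1}, i_n)]]. *)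
Fixpoint valid (i : nat) (rest : seq (nat * nat)) : bool :=
  match rest with
  | [::] => true
  | (j, i2) :: r => [&& j < i, j < i2 & valid i2 r]
  end.

Definition tdim (i : nat) (rest : seq (nat * nat)) : nat :=
  foldr (fun p m => maxn (maxn p.1 p.2) m) i rest.

(** Cocones over the diagram D_{i_1} <- D_{i'_1} -> D_{i_2} <- ... -> D_{i_n}. *)
Fixpoint cocone_t (X : Ob C) (i : nat) (rest : seq (nat * nat)) : Type :=
  match rest with
  | [::] => Hom (D C i) X
  | (j, i2) :: r => (Hom (D C i) X * cocone_t X i2 r)%type
  end.

Definition chead (X : Ob C) (i : nat) (rest : seq (nat * nat)) :
    cocone_t X i rest -> Hom (D C i) X :=
  match rest as l return cocone_t X i l -> Hom (D C i) X with
  | [::] => fun f => f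
  | (j, i2) :: r => fun c => c.1
  end.

Fixpoint ccompat (X : Ob C) (i : nat) (rest : seq (nat * nat)) :
    cocone_t X i rest -> Prop :=
  match rest as l return cocone_t X i l -> Prop with
  | [::] => fun _ => True
  | (j, i2) :: r => fun c =>
      (forall s t, IsSig i j s -> IsTau i2 j t ->
         cmp c.1 s = cmp (chead c.2) t) /\ ccompat c.2
  end.

Fixpoint cmap (X Y : Ob C) (h : Hom X Y) (i : nat) (rest : seq (nat * nat)) :
    cocone_t X i rest -> cocone_t Y i rest :=
  match rest as l return cocone_t X i l -> cocone_t Y i l with
  | [::] => fun f => cmp h f
  | (j, i2) :: r => fun c => (cmp h c.1, cmap h c.2)
  end.

Definition is_gsum (i : nat) (rest : seq (nat * nat)) (S : Ob C)
    (c : cocone_t S i rest) : Prop :=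
  ccompat c /\
  forall (X : Ob C) (c' : cocone_t X i rest), ccompat c' ->
    exists! h : Hom S X, cmap h c = c'.

End Globular.

Record GlobExt := {
  GE :> GCat;
  gsum : nat -> seq (nat * nat) -> Ob GE;
  gcoc : forall i rest, cocone_t (gsum i rest) i rest;
  gsum_ok : forall i rest, valid i rest -> is_gsum (gcoc i rest) }.

Section GlobExtDefs.
Variable E : GlobExt.

Definition psum (i j : nat) : Ob E := gsum E i [:: (j, i)].
Definition eps1 (i j : nat) : Hom (D E i) (psum i j) :=
  (gcoc E i [:: (j, i)]).1.
Definition eps2 (i j : nat) : Hom (D E i) (psum i j) :=
  (gcoc E i [:: (j, i)]).2.

Definition gparallel (X : Ob E) (n : nat) : Hom (D E n) X -> Hom (D E n) X -> Prop :=
  match n as k return Hom (D E k) X -> Hom (D E k) X -> Prop with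
  | 0 => fun _ _ => True
  | m.+1 => fun f g => cmp f (sg E m) = cmp g (sg E m) /\
                       cmp f (tg E m) = cmp g (tg E m)
  end.

Definition lifting (X : Ob E) (n : nat) (f g : Hom (D E n) X)
    (h : Hom (D E n.+1) X) : Prop :=
  cmp h (sg E n) = f /\ cmp h (tg E n) = g.

Definition contractible : Prop :=
  forall (n i : nat) (rest : seq (nat * nat)), valid i rest -> tdim i rest <= n.+1 ->
    forall f g : Hom (D E n) (gsum E i rest), gparallel f g ->
      exists h, lifting f g h.

Record Pregpd := {
  nab : forall i j, Hom (D E i) (psum i j);     (* nabla^i_j, meaningful for j < i *)
  kap : forall i, Hom (D E i.+1) (D E i);
  wv  : forall i j, Hom (D E i) (D E i);        (* w^i_j, meaningful for j < i *)
  nab_sg_top : forall m, cmp (nab m.+1 m) (sg E m) = cmp (eps2 m.+1 m) (sg E m);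
  nab_tg_top : forall m, cmp (nab m.+1 m) (tg E m) = cmp (eps1 m.+1 m) (tg E m);
  (* h below is the induced map sigma_i amalg_{D_j} sigma_i (resp. tau) *)
  nab_sg : forall m j, j < m -> forall h : Hom (psum m j) (psum m.+1 j),
      cmp h (eps1 m j) = cmp (eps1 m.+1 j) (sg E m) ->
      cmp h (eps2 m j) = cmp (eps2 m.+1 j) (sg E m) ->
      cmp (nab m.+1 j) (sg E m) = cmp h (nab m j);
  nab_tg : forall m j, j < m -> forall h : Hom (psum m j) (psum m.+1 j),
      cmp h (eps1 m j) = cmp (eps1 m.+1 j) (tg E m) ->
      cmp h (eps2 m j) = cmp (eps2 m.+1 j) (tg E m) ->
      cmp (nab m.+1 j) (tg E m) = cmp h (nab m j);
  kap_sg : forall i, cmp (kap i) (sg E i) = cid (D E i);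
  kap_tg : forall i, cmp (kap i) (tg E i) = cid (D E i);
  w_sg_top : forall m, cmp (wv m.+1 m) (sg E m) = tg E m;
  w_tg_top : forall m, cmp (wv m.+1 m) (tg E m) = sg E m;
  w_sg : forall m j, j < m -> cmp (wv m.+1 j) (sg E m) = cmp (sg E m) (wv m j);
  w_tg : forall m j, j < m -> cmp (wv m.+1 j) (tg E m) = cmp (tg E m) (wv m j) }.

End GlobExtDefs.

Record Presheaf (C : Cat) := {
  Pob : Ob C -> Type;
  Pmap : forall a b, Hom a b -> Pob b -> Pob a;
  Pmap_id : forall a (x : Pob a), Pmap (cid a) x = x;
  Pmap_cmp : forall a b c (g : Hom b c) (f : Hom a b) (x : Pob c),
      Pmap (cmp g f) x = Pmap f (Pmap g x) }.

Section Groupoids.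
Variable E : GlobExt.
Variable P : Presheaf E.

(** elements of G_{i_1} x_{G_{i'_1}} ... x_{G_{i'_{n-1}}} G_{i_n} *)
Fixpoint fam_t (i : nat) (rest : seq (nat * nat)) : Type :=
  match rest with
  | [::] => Pob P (D E i)
  | (j, i2) :: r => (Pob P (D E i) * fam_t i2 r)%type
  end.

Definition fhead (i : nat) (rest : seq (nat * nat)) : fam_t i rest -> Pob P (D E i) :=
  match rest as l return fam_t i l -> Pob P (D E i) with
  | [::] => fun x => x
  | (j, i2) :: r => fun x => x.1
  end.

Fixpoint fcompat (i : nat) (rest : seq (nat * nat)) : fam_t i rest -> Prop :=
  match rest as l return fam_t i l -> Prop with
  | [::] => fun _ => True
  | (j, i2) :: r => fun x =>
      (forall s t, IsSig E i j s -> IsTau E i2 j t ->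
         Pmap s x.1 = Pmap t (fhead x.2)) /\ fcompat x.2
  end.

Fixpoint frestr (S : Ob E) (i : nat) (rest : seq (nat * nat)) :
    cocone_t S i rest -> Pob P S -> fam_t i rest :=
  match rest as l return cocone_t S i l -> Pob P S -> fam_t i l with
  | [::] => fun f x => Pmap f x
  | (j, i2) :: r => fun c x => (Pmap c.1 x, frestr c.2 x)
  end.

Definition is_infgpd : Prop :=
  forall (i : nat) (rest : seq (nat * nat)), valid i rest ->
    forall fm : fam_t i rest, fcompat fm ->
      exists! x : Pob P (gsum E i rest), frestr (gcoc E i rest) x = fm.

Definition psrc (n : nat) : Pob P (D E n.+1) -> Pob P (D E n) := Pmap (sg E n).
Definition ptgt (n : nat) : Pob P (D E n.+1) -> Pob P (D E n) := Pmap (tg E n).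

(** [gcomp S m v u w] : w = v *^{m+1}_m u for the pregroupoidal structure S,
    i.e. w = G(nabla^{m+1}_m)(xi) with xi corresponding to (v,u). *)
Definition gcomp (S : Pregpd E) (m : nat) (v u w : Pob P (D E m.+1)) : Prop :=
  exists xi : Pob P (psum E m.+1 m),
    Pmap (eps1 E m.+1 m) xi = v /\ Pmap (eps2 E m.+1 m) xi = u /\
    w = Pmap (nab S m.+1 m) xi.

Definition gunit (S : Pregpd E) (m : nat) : Pob P (D E m) -> Pob P (D E m.+1) :=
  Pmap (kap S m).

Definition gsim (n : nat) (u v : Pob P (D E n)) : Prop :=
  exists a : Pob P (D E n.+1), psrc a = u /\ ptgt a = v.

End Groupoids.

From mathcomp Require Import all_boot.

Set Implicit Arguments.
Unset Strict Implicit.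
Unset Printing Implicit Defensive.

(* The key observation is homotopical: if two morphisms f, g : D_n -> X admit
   a lifting h : D_{n+1} -> X, then for every x in G(X) the n-arrow
   G(h)(x) goes from G(f)(x) to G(g)(x), so G(f)(x) ~ G(g)(x).  When X is a
   globular sum of dimension <= n+1 and f, g are globularly parallel,
   contractibility supplies such a lifting.

   For compositions, the two operations nabla^{m+1}_m of the two structures
   are globularly parallel maps into D_{m+1} amalg_{D_m} D_{m+1}, a globular
   sum of dimension m+1; since G is an infinity-groupoid, the element xi
   corresponding to a composable pair (v, u) is unique, so both composites
   are images of the same xi and hence equivalent.  For identities, the two
   maps kappa_m are parallel (both are retractions of sigma and tau); every
   m-arrow comes from the globular sum D_m (again by the groupoid condition),
   so the two units are images of one element under parallel maps. *)

Section Groupoid.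
Variable E : GlobExt.
Variable P : Presheaf E.

Lemma fhead_frestr (S : Ob E) (i : nat) (rest : seq (nat * nat))
    (c : cocone_t S i rest) (x : Pob P S) :
  fhead (frestr (P:=P) c x) = Pmap (p:=P) (chead c) x.
Proof. by case: rest c => [|[j i2] r] c. Qed.

Lemma frestr_compat (S : Ob E) (i : nat) (rest : seq (nat * nat))
    (c : cocone_t S i rest) (x : Pob P S) :
  ccompat c -> fcompat (frestr (P:=P) c x).
Proof.
elim: rest i c => [//|[j i2] r IHr] i [c1 c2] /= [hc1 hc2]; split; last exact: IHr.
by move=> s t hs ht; rewrite fhead_frestr -!Pmap_cmp (hc1 s t hs ht).
Qed.

Hypothesis hP : is_infgpd P.

Lemma gsum_restr_inj (i : nat) (rest : seq (nat * nat)) (x y : Pob P (gsum E i rest)) :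
  valid i rest -> frestr (P:=P) (gcoc E i rest) x = frestr (P:=P) (gcoc E i rest) y -> x = y.
Proof.
move=> hv exy; have [hcc _] := gsum_ok E hv.
have [z [_ zu]] := hP hv (frestr_compat x hcc).
by rewrite -(zu x erefl) (zu y (esym exy)).
Qed.

Lemma gsum_restr_surj (i : nat) (rest : seq (nat * nat)) (fm : fam_t P i rest) :
  valid i rest -> fcompat fm -> exists x, frestr (P:=P) (gcoc E i rest) x = fm.
Proof. by move=> hv hfm; have [x [ex _]] := hP hv hfm; exists x. Qed.

End Groupoid.

Lemma lifting_gsim (E : GlobExt) (P : Presheaf E) (X : Ob E) (n : nat)
    (f g : Hom (D E n) X) (h : Hom (D E n.+1) X) :
  lifting f g h -> forall x : Pob P X, gsim (Pmap (p:=P) f x) (Pmap (p:=P) g x).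
Proof.
by case=> hs ht x; exists (Pmap (p:=P) h x); rewrite /psrc /ptgt -!Pmap_cmp hs ht.
Qed.

Lemma contractible_gsim (E : GlobExt) (P : Presheaf E) (n i : nat)
    (rest : seq (nat * nat)) (f g : Hom (D E n) (gsum E i rest)) :
  contractible E -> valid i rest -> tdim i rest <= n.+1 -> gparallel f g ->
  forall x : Pob P (gsum E i rest), gsim (Pmap (p:=P) f x) (Pmap (p:=P) g x).
Proof.
move=> hE hv hdim hfg; have [h hl] := hE n i rest hv hdim f g hfg.
exact: lifting_gsim hl.
Qed.

Lemma psum_valid (m : nat) : valid m.+1 [:: (m, m.+1)].
Proof. by rewrite /= !ltnSn. Qed.

Lemma psum_tdim (m : nat) : tdim m.+1 [:: (m, m.+1)] = m.+1.
Proof. by rewrite /tdim /= (maxn_idPr (leqnSn m)) maxnn. Qed.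

Lemma nab_parallel (E : GlobExt) (S1 S2 : Pregpd E) (m : nat) :
  gparallel (nab S1 m.+1 m) (nab S2 m.+1 m).
Proof. by split; rewrite ?nab_sg_top ?nab_tg_top. Qed.

Lemma kap_parallel (E : GlobExt) (S1 S2 : Pregpd E) (m : nat) (X : Ob E)
    (c : Hom (D E m) X) :
  gparallel (cmp c (kap S1 m)) (cmp c (kap S2 m)).
Proof. by split; rewrite /= -!cmpA ?kap_sg ?kap_tg. Qed.

Theorem proposition4 (E : GlobExt) (hE : contractible E)
    (P : Presheaf E) (hP : is_infgpd P) (S1 S2 : Pregpd E) (m : nat) :
  (forall v u : Pob P (D E m.+1), psrc v = ptgt u ->
     forall w1 w2, gcomp S1 v u w1 -> gcomp S2 v u w2 -> gsim w1 w2) /\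
  (forall x : Pob P (D E m), gsim (gunit S1 x) (gunit S2 x)).
Proof.
split.
- (* both composites are images of the unique xi corresponding to (v, u) *)
  move=> v u _ w1 w2 [xi1 [ev1 [eu1 ->]]] [xi2 [ev2 [eu2 ->]]].
  have exi : xi1 = xi2.
    apply: (gsum_restr_inj hP (psum_valid m)).
    exact: (congr2 pair (etrans ev1 (esym ev2)) (etrans eu1 (esym eu2))).
  rewrite exi; apply: contractible_gsim hE (psum_valid m) _ (nab_parallel S1 S2 m) _.
  by rewrite psum_tdim.
- (* x comes from the globular sum D_m, through which both units factor *)
  move=> x.
  have [y ey] := gsum_restr_surj hP (fm := x : fam_t P m [::]) (erefl : valid m [::]) I.
  rewrite /gunit -{}ey /= -!Pmap_cmp.
  have hpar := kap_parallel S1 S2 (gcoc E m [::] : Hom (D E m) _).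
  by apply: contractible_gsim hE _ _ hpar _ => //=; rewrite ltnW.
Qed.
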